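(* In the model of the context, fix a time $t$ and suppose $\rho_\varepsilon(t,\cdot)$ is smooth with $|\rho_e(t,r)|<1$ for all $r$. Then $j_\varepsilon(t,\cdot)\equiv0$ if and only if both standard potentials $\Omega_E^1(t,\cdot)$ and $\Omega_E^2(t,\cdot)$ are constant in $r$. In that case, for any reference point $r_0\in\mathbb{R}$ and all $r\in\mathbb{R}$, $$\Omega_e^1(t,r)=\Omega_e^1(t,r_0)\,\overline{\Delta}(r),\qquad \Omega_e^2(t,r)=\big(\Omega_e^2(t,r_0)-\overline{B}(r)\,\Omega_e^1(t,r_0)\big)\,\overline{\Delta}(r),$$ where $\overline{B}(r)=(B(r)-B(r_0))/B_d$ and $\overline{\Delta}(r)=\Delta(r)/\Delta(r_0)$; the corresponding densities are given by $\rho_{e,i}=-\Omega_e^i\tanh(|\Omega_e|)/|\Omega_e|$ (and $\rho_e=0$ where $\Omega_e=0$), and such a state is stationary ($\partial_t\rho_\varepsilon=0$). In particular, if $\Delta$ is constant then $\Omega_e^1$ is constant in $r$.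
   Context: Model setup. Fix constants $\mu>0$, $B_d>0$, $\Gamma>0$, and smooth functions $B:\mathbb{R}\to\mathbb{R}$ (external field) and $\Delta:\mathbb{R}\to(0,\infty)$ (spin density). The state is given by smooth standard components $\rho_\varepsilon(t,r)=(\rho_{\varepsilon,1},\rho_{\varepsilon,2})$. Polarization-basis components are $\rho_e=P(r)\rho_\varepsilon$ with $P(r)=\frac{1}{\mu\Delta(r)}\begin{pmatrix}1/B_d & B(r)/B_d\\ 0&1\end{pmatrix}$. With $\sigma(p)=\tfrac12\ln4+\tfrac12(p-1)\ln(1-p)-\tfrac12(p+1)\ln(1+p)$ on $[0,1)$, the entropy density is $s=\sigma(|\rho_e|)$ (Euclidean norm) on $|\rho_e|<1$. Standard potentials: $\Omega_E^i=\partial s/\partial\rho_{\varepsilon,i}$; polarization potentials: $\Omega_e^i=\partial s/\partial\rho_{e,i}$ (so $\Omega_E=P^T\Omega_e$). With $H_\varepsilon$ the negative definite Hessian of $s$ with respect to $\rho_\varepsilon$, the current is $j_\varepsilon=-\Gamma H_\varepsilon^{-1}\partial_r\Omega_E$ and the dynamics are $\partial_t\rho_\varepsilon=-\partial_r j_\varepsilon$. *)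

From Stdlib Require Import Reals Lra ClassicalEpsilon.
Open Scope R_scope.

(* Total derivative operator: the derivative of f at x whenever it exists
   (chosen by Hilbert epsilon; unspecified otherwise). *)
Definition deriv (f : R -> R) (x : R) : R :=
  epsilon (inhabits 0) (fun l => derivable_pt_lim f x l).

Definition smooth (f : R -> R) : Prop :=
  exists D : nat -> R -> R, D O = f /\
    forall (n : nat) (x : R), derivable_pt_lim (D n) x (D (S n) x).

Definition sigma (p : R) : R :=
  / 2 * ln 4 + / 2 * (p - 1) * ln (1 - p) - / 2 * (p + 1) * ln (1 + p).

(* Polarization-basis components rho_e = P(r) rho_eps, with
   P(r) = 1/(mu Delta(r)) [[1/Bd, B(r)/Bd],[0,1]] *)
Definition rhoE1 (mu Bd : R) (B Delta : R -> R) (r x1 x2 : R) : R :=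
  / (mu * Delta r) * (/ Bd * x1 + B r / Bd * x2).
Definition rhoE2 (mu Bd : R) (B Delta : R -> R) (r x1 x2 : R) : R :=
  / (mu * Delta r) * x2.

Definition norm2 (y1 y2 : R) : R := sqrt (y1 ^ 2 + y2 ^ 2).

Definition s_pol (y1 y2 : R) : R := sigma (norm2 y1 y2).

Definition s_std (mu Bd : R) (B Delta : R -> R) (r x1 x2 : R) : R :=
  s_pol (rhoE1 mu Bd B Delta r x1 x2) (rhoE2 mu Bd B Delta r x1 x2).

Definition Ome1 (y1 y2 : R) : R := deriv (fun z => s_pol z y2) y1.
Definition Ome2 (y1 y2 : R) : R := deriv (fun z => s_pol y1 z) y2.

Definition OmE1 mu Bd B Delta (r x1 x2 : R) : R :=
  deriv (fun z => s_std mu Bd B Delta r z x2) x1.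
Definition OmE2 mu Bd B Delta (r x1 x2 : R) : R :=
  deriv (fun z => s_std mu Bd B Delta r x1 z) x2.

Definition H11 mu Bd B Delta (r x1 x2 : R) : R :=
  deriv (fun z => OmE1 mu Bd B Delta r z x2) x1.
Definition H12 mu Bd B Delta (r x1 x2 : R) : R :=
  deriv (fun z => OmE1 mu Bd B Delta r x1 z) x2.
Definition H21 mu Bd B Delta (r x1 x2 : R) : R :=
  deriv (fun z => OmE2 mu Bd B Delta r z x2) x1.
Definition H22 mu Bd B Delta (r x1 x2 : R) : R :=
  deriv (fun z => OmE2 mu Bd B Delta r x1 z) x2.

Section State.
Variables (mu Bd Gam : R) (B Delta : R -> R) (rho1 rho2 : R -> R -> R) (t : R).

Definition re1 (r : R) : R := rhoE1 mu Bd B Delta r (rho1 t r) (rho2 t r).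
Definition re2 (r : R) : R := rhoE2 mu Bd B Delta r (rho1 t r) (rho2 t r).

Definition OE1 (r : R) : R := OmE1 mu Bd B Delta r (rho1 t r) (rho2 t r).
Definition OE2 (r : R) : R := OmE2 mu Bd B Delta r (rho1 t r) (rho2 t r).

Definition Oe1 (r : R) : R := Ome1 (re1 r) (re2 r).
Definition Oe2 (r : R) : R := Ome2 (re1 r) (re2 r).

Definition h11 (r : R) : R := H11 mu Bd B Delta r (rho1 t r) (rho2 t r).
Definition h12 (r : R) : R := H12 mu Bd B Delta r (rho1 t r) (rho2 t r).
Definition h21 (r : R) : R := H21 mu Bd B Delta r (rho1 t r) (rho2 t r).
Definition h22 (r : R) : R := H22 mu Bd B Delta r (rho1 t r) (rho2 t r).
Definition hdet (r : R) : R := h11 r * h22 r - h12 r * h21 r.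

(* current j_eps = - Gamma H_eps^{-1} d_r Omega_E *)
Definition j1 (r : R) : R :=
  - Gam * (/ hdet r * (h22 r * deriv OE1 r - h12 r * deriv OE2 r)).
Definition j2 (r : R) : R :=
  - Gam * (/ hdet r * (- h21 r * deriv OE1 r + h11 r * deriv OE2 r)).
End State.

From Stdlib Require Import Reals ClassicalEpsilon Lra.
From Coquelicot Require Import Coquelicot.
From Pilot Require Import Defs.
Open Scope R_scope.

(* Write q = |rho_e|^2.  The function sigma(sqrt q) is analytic in q on
   [0, 1): it is the power series Entropy_series, whose derivative is -Phi(q)/2 with
   Phi(q) = sum_k q^k/(2k+1) = artanh(sqrt q)/sqrt q.  Hence the polarization potentials
   are Omega_e = -Phi(q) rho_e, smooth even at rho_e = 0, and the standard potentials are
   Omega_E = P^T Omega_e.  Differentiating once more, the Hessian has determinant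
   det(P)^2 Phi(q) (Phi(q) + 2 q Phi'(q)) = det(P)^2 Phi(q) / (1 - q) > 0, so H_eps is
   invertible and the current -Gam H_eps^{-1} d_r Omega_E vanishes iff Omega_E is constant.
   With Omega_E = (c1, c2) constant, Omega_e = P^{-T} (c1, c2) is explicit, which gives the
   profile formula; |Omega_e| = Phi(|rho_e|^2) |rho_e| = artanh |rho_e| inverts to the
   tanh formula for the density; and a vanishing current has vanishing divergence.
   The file develops, in order: the power series Phi and Entropy_series; the derivative
   of the entropy density along curves; the change of basis P and the Hessian
   determinant; general facts about vanishing currents; the quantities along the state;
   and finally the theorem. *)

Lemma CV_radius_ge_1 (a : nat -> R) :
  (forall n, Rabs (a n) <= 1) ->
  forall q, Rabs q < 1 -> Rbar_lt (Rabs q) (CV_radius a).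
Proof.
  intros Ha q Hq.
  destruct (CV_radius_bounded a) as [Hub _].
  assert (Hge1 : Rbar_le (Finite 1) (CV_radius a)).
  { apply Hub. exists 1. intro n. rewrite pow1, Rmult_1_r. apply Ha. }
  eapply Rbar_lt_le_trans; [|exact Hge1]. exact Hq.
Qed.

(* Phi q = sum_k q^k / (2k+1), i.e. artanh(sqrt q) / sqrt q. *)
Definition artanh_coef (k : nat) : R := / (2 * INR k + 1).
Definition Phi (q : R) : R := PSeries artanh_coef q.
Definition dPhi (q : R) : R := PSeries (PS_derive artanh_coef) q.

(* Entropy_series q = ln 2 - sum_{k>=1} q^k / (2k(2k-1)), i.e. sigma(sqrt q). *)
Definition entropy_coef (k : nat) : R :=
  match k with O => ln 2 | S n => - / (2 * INR (S n) * (2 * INR n + 1)) end.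
Definition Entropy_series (q : R) : R := PSeries entropy_coef q.

Lemma artanh_coef_bound n : Rabs (artanh_coef n) <= 1.
Proof.
  unfold artanh_coef. pose proof (pos_INR n).
  rewrite Rabs_pos_eq by (left; apply Rinv_0_lt_compat; lra).
  rewrite <- Rinv_1. apply Rinv_le_contravar; lra.
Qed.

Lemma PS_derive_entropy_coef n : PS_derive entropy_coef n = - / 2 * artanh_coef n.
Proof.
  unfold PS_derive, entropy_coef, artanh_coef. rewrite S_INR.
  pose proof (pos_INR n). field. lra.
Qed.

Lemma is_derive_Phi q : Rabs q < 1 -> is_derive Phi q (dPhi q).
Proof.
  intro Hq. apply is_derive_PSeries, CV_radius_ge_1; [apply artanh_coef_bound | exact Hq].
Qed.

Lemma is_derive_Entropy_series q :
  Rabs q < 1 -> is_derive Entropy_series q (- / 2 * Phi q).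
Proof.
  intro Hq.
  replace (- / 2 * Phi q) with (PSeries (PS_derive entropy_coef) q).
  - apply is_derive_PSeries. rewrite <- CV_radius_derive.
    apply CV_radius_ge_1; [|exact Hq]. intro n.
    rewrite PS_derive_entropy_coef, Rabs_mult, Rabs_Ropp, Rabs_pos_eq by lra.
    pose proof (artanh_coef_bound n). pose proof (Rabs_pos (artanh_coef n)). nra.
  - unfold Phi. rewrite <- PSeries_scal. apply PSeries_ext.
    intro n. apply PS_derive_entropy_coef.
Qed.

(* Phi + 2 q Phi' = 1/(1-q): every coefficient of the left-hand side equals 1.  This is
   the identity (sqrt q Phi(q))' = 1/(2 sqrt q (1-q)) satisfied by artanh. *)
Lemma Phi_identity q : Rabs q < 1 -> Phi q + 2 * q * dPhi q = / (1 - q).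
Proof.
  intro Hq. unfold Phi, dPhi.
  rewrite Rmult_assoc, <- (PSeries_incr_1 (PS_derive artanh_coef)), <- PSeries_scal.
  rewrite <- PSeries_plus.
  2: { apply CV_radius_inside, CV_radius_ge_1; [apply artanh_coef_bound | exact Hq]. }
  2: { apply CV_radius_inside. rewrite CV_radius_scal by lra.
       rewrite CV_radius_incr_1, CV_radius_derive.
       apply CV_radius_ge_1; [apply artanh_coef_bound | exact Hq]. }
  rewrite (PSeries_ext _ (fun _ => 1)).
  - apply is_pseries_unique, is_pseries_R.
    eapply is_series_ext; [|apply is_series_geom; exact Hq].
    intro n. simpl. ring.
  - intros [|m]; unfold PS_plus, PS_scal, PS_incr_1, PS_derive, artanh_coef;
      unfold plus, scal, mult; cbn -[INR].
    + simpl. field.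
    + pose proof (pos_INR (S m)). field. lra.
Qed.

Lemma eq_of_deriv_zero (f : R -> R) a b :
  a <= b -> (forall c, a <= c <= b -> derivable_pt_lim f c 0) -> f b = f a.
Proof.
  intros Hab Hf. destruct (Req_dec a b) as [<-|Hne]; [reflexivity|].
  destruct (MVT_cor2 f (fun _ => 0) a b) as [c [Hc _]]; [lra|exact Hf|lra].
Qed.

Lemma sq_lt_1 p : -1 < p < 1 -> Rabs (p * (p * 1)) < 1.
Proof. intro. rewrite Rabs_pos_eq by nra. nra. Qed.

Lemma Phi_artanh p :
  0 <= p < 1 -> p * Phi (p ^ 2) = / 2 * (ln (1 + p) - ln (1 - p)).
Proof.
  intro Hp.
  set (L := fun p => p * Phi (p ^ 2) - / 2 * (ln (1 + p) - ln (1 - p))).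
  enough (L p = L 0) by (unfold L in *; rewrite Rplus_0_r, Rminus_0_r, ln_1 in *; lra).
  apply eq_of_deriv_zero; [lra|]. intros c Hc. apply is_derive_Reals.
  pose proof (is_derive_Phi _ (sq_lt_1 c ltac:(lra))) as DPhi.
  unfold L. auto_derive.
  - repeat split; try lra. eexists; exact DPhi.
  - replace (Derive (fun x => Phi x) _) with (dPhi (c * (c * 1)))
      by (symmetry; apply is_derive_unique; exact DPhi).
    rewrite <- (Rminus_diag_eq _ _ (Phi_identity _ (sq_lt_1 c ltac:(lra)))).
    field. split; [|split]; nra.
Qed.

Lemma Entropy_series_sigma q : 0 <= q < 1 -> Entropy_series q = sigma (sqrt q).
Proof.
  intro Hq.
  assert (Hp : 0 <= sqrt q < 1).
  { split; [apply sqrt_pos|]. rewrite <- sqrt_1. apply sqrt_lt_1; lra. }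
  rewrite <- (pow2_sqrt q) at 1 by lra.
  set (K := fun p => Entropy_series (p ^ 2) - sigma p).
  assert (K0 : K 0 = 0).
  { unfold K, Entropy_series, sigma.
    replace (0 ^ 2) with 0 by ring. rewrite PSeries_0. simpl.
    rewrite Rminus_0_r, Rplus_0_r, ln_1.
    replace 4 with (2 * 2) by ring. rewrite ln_mult by lra. field. }
  enough (K (sqrt q) = K 0) by (unfold K in *; lra).
  apply eq_of_deriv_zero; [lra|]. intros c Hc. apply is_derive_Reals.
  pose proof (is_derive_Entropy_series _ (sq_lt_1 c ltac:(lra))) as DS.
  unfold K, sigma. auto_derive.
  - repeat split; try lra. eexists; exact DS.
  - replace (Derive (fun x => Entropy_series x) _) with (- / 2 * Phi (c * (c * 1)))
      by (symmetry; apply is_derive_unique; exact DS).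
    pose proof (Phi_artanh c ltac:(lra)) as A. simpl in A.
    transitivity (- (c * Phi (c * (c * 1))) + / 2 * (ln (1 + c) - ln (1 - c)));
      [|rewrite A; ring].
    replace (1 + - c) with (1 - c) by ring. field. lra.
Qed.

(* Phi(q) = artanh(sqrt q)/sqrt q > 0; this makes the Hessian negative definite. *)
Lemma Phi_pos q : 0 <= q < 1 -> 0 < Phi q.
Proof.
  intro Hq. destruct (Req_dec q 0) as [->|Hq0].
  - unfold Phi. rewrite PSeries_0. unfold artanh_coef. simpl. lra.
  - set (p := sqrt q).
    assert (Hp : 0 < p < 1).
    { split; [apply sqrt_lt_R0; lra|]. unfold p. rewrite <- sqrt_1. apply sqrt_lt_1; lra. }
    pose proof (Phi_artanh p ltac:(lra)) as E.
    replace (p ^ 2) with q in E by (symmetry; apply pow2_sqrt; lra).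
    assert (ln (1 - p) < ln (1 + p)) by (apply ln_increasing; lra).
    apply (Rmult_lt_reg_l p); lra.
Qed.

Lemma tanh_artanh p : -1 < p < 1 -> tanh (/ 2 * (ln (1 + p) - ln (1 - p))) = p.
Proof.
  intro Hp. unfold tanh, sinh, cosh.
  set (x := / 2 * (ln (1 + p) - ln (1 - p))).
  assert (E2 : exp x * exp x = (1 + p) / (1 - p)).
  { rewrite <- exp_plus. replace (x + x) with (ln (1 + p) + - ln (1 - p)) by (unfold x; field).
    rewrite exp_plus, exp_Ropp, !exp_ln by lra. field. lra. }
  rewrite exp_Ropp. pose proof (exp_pos x).
  replace ((exp x - / exp x) / 2 / ((exp x + / exp x) / 2))
    with ((exp x * exp x - 1) / (exp x * exp x + 1)) by (field; split; nra).
  rewrite E2. field. lra.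
Qed.

Lemma deriv_eq f x l : derivable_pt_lim f x l -> deriv f x = l.
Proof.
  intro H. unfold deriv.
  pose proof (epsilon_spec (inhabits 0) _ (ex_intro _ l H)) as H'.
  eapply uniqueness_limite; eassumption.
Qed.

Lemma deriv_correct f x : ex_derive f x -> derivable_pt_lim f x (deriv f x).
Proof.
  intros [l Hl]. apply is_derive_Reals in Hl. rewrite (deriv_eq _ _ _ Hl). exact Hl.
Qed.

Lemma s_pol_series y1 y2 :
  y1 ^ 2 + y2 ^ 2 < 1 -> s_pol y1 y2 = Entropy_series (y1 ^ 2 + y2 ^ 2).
Proof.
  intro H. unfold s_pol, norm2. symmetry. apply Entropy_series_sigma. nra.
Qed.

Section Along_a_curve.
Variables (u v : R -> R) (u' v' z0 : R).
Hypotheses (Du : is_derive u z0 u') (Dv : is_derive v z0 v').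

Let q z := u z ^ 2 + v z ^ 2.

Lemma is_derive_sqnorm : is_derive q z0 (2 * u z0 * u' + 2 * v z0 * v').
Proof.
  unfold q. auto_derive.
  - repeat split; eexists; eassumption.
  - replace (Derive (fun x => u x) z0) with u' by (symmetry; apply is_derive_unique, Du).
    replace (Derive (fun x => v x) z0) with v' by (symmetry; apply is_derive_unique, Dv).
    ring.
Qed.

Hypothesis Hq : q z0 < 1.

Lemma near_inside : locally z0 (fun z => q z < 1).
Proof.
  exact (ex_derive_continuous q z0 (ex_intro _ _ is_derive_sqnorm) _ (open_lt 1 _ Hq)).
Qed.

Lemma Rabs_sqnorm : Rabs (q z0) < 1.
Proof. rewrite Rabs_pos_eq; [exact Hq | unfold q; nra]. Qed.

Lemma s_pol_chain :
  is_derive (fun z => s_pol (u z) (v z)) z0 (- Phi (q z0) * (u z0 * u' + v z0 * v')).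
Proof.
  apply (is_derive_ext_loc (fun z => Entropy_series (q z))).
  { apply (filter_imp _ _ (fun z H => eq_sym (s_pol_series _ _ H)) near_inside). }
  replace (- Phi (q z0) * (u z0 * u' + v z0 * v'))
    with (scal (2 * u z0 * u' + 2 * v z0 * v') (- / 2 * Phi (q z0)))
    by (unfold scal; simpl; unfold mult; simpl; field).
  exact (is_derive_comp Entropy_series q z0 _ _
           (is_derive_Entropy_series _ Rabs_sqnorm) is_derive_sqnorm).
Qed.

Lemma Phi_field_chain (g : R -> R) (a b : R) :
  (forall z, q z < 1 -> g z = - Phi (q z) * (u z * a + v z * b)) ->
  is_derive g z0 (- (dPhi (q z0) * (2 * u z0 * u' + 2 * v z0 * v') * (u z0 * a + v z0 * b)
                    + Phi (q z0) * (u' * a + v' * b))).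
Proof.
  intro Hg.
  apply (is_derive_ext_loc (fun z => - Phi (q z) * (u z * a + v z * b))).
  { apply (filter_imp _ _ (fun z H => eq_sym (Hg z H)) near_inside). }
  auto_derive.
  - repeat split; eexists;
      [apply is_derive_Phi, Rabs_sqnorm | apply is_derive_sqnorm | exact Du | exact Dv].
  - replace (Derive (fun x => u x) z0) with u' by (symmetry; apply is_derive_unique, Du).
    replace (Derive (fun x => v x) z0) with v' by (symmetry; apply is_derive_unique, Dv).
    replace (Derive (fun x => Phi x) (q z0)) with (dPhi (q z0))
      by (symmetry; apply is_derive_unique, is_derive_Phi, Rabs_sqnorm).
    replace (Derive (fun x => q x) z0) with (2 * u z0 * u' + 2 * v z0 * v')
      by (symmetry; apply is_derive_unique, is_derive_sqnorm).
    ring.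
Qed.
End Along_a_curve.

Lemma deriv_of_is_derive f x l : is_derive f x l -> deriv f x = l.
Proof. intro H. apply deriv_eq, is_derive_Reals, H. Qed.

Lemma Ome_form y1 y2 : y1 ^ 2 + y2 ^ 2 < 1 ->
  Ome1 y1 y2 = - Phi (y1 ^ 2 + y2 ^ 2) * y1 /\
  Ome2 y1 y2 = - Phi (y1 ^ 2 + y2 ^ 2) * y2.
Proof.
  intro H.
  assert (Did : forall y, is_derive (fun z => z) y 1)
    by (intro; apply is_derive_Reals, derivable_pt_lim_id).
  assert (Dcst : forall c y, is_derive (fun _ => c) y 0)
    by (intros; apply is_derive_Reals, derivable_pt_lim_const).
  unfold Ome1, Ome2. split; apply deriv_of_is_derive.
  - replace (- Phi (y1 ^ 2 + y2 ^ 2) * y1) with (- Phi (y1 ^ 2 + y2 ^ 2) * (y1 * 1 + y2 * 0))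
      by ring.
    exact (s_pol_chain (fun z => z) (fun _ => y2) _ _ _ (Did y1) (Dcst y2 y1) H).
  - replace (- Phi (y1 ^ 2 + y2 ^ 2) * y2) with (- Phi (y1 ^ 2 + y2 ^ 2) * (y1 * 0 + y2 * 1))
      by ring.
    exact (s_pol_chain (fun _ => y1) (fun z => z) _ _ _ (Dcst y1 y2) (Did y2) H).
Qed.

Section Change_of_basis.
Variables (mu Bd : R) (B Delta : R -> R).

Definition P11 (r : R) : R := / (mu * Delta r) * / Bd.
Definition P12 (r : R) : R := / (mu * Delta r) * (B r / Bd).
Definition P22 (r : R) : R := / (mu * Delta r).

Let Q r x1 x2 := rhoE1 mu Bd B Delta r x1 x2 ^ 2 + rhoE2 mu Bd B Delta r x1 x2 ^ 2.

Lemma rhoE_partials r x1 x2 :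
  is_derive (fun z => rhoE1 mu Bd B Delta r z x2) x1 (P11 r) /\
  is_derive (fun z => rhoE2 mu Bd B Delta r z x2) x1 0 /\
  is_derive (fun z => rhoE1 mu Bd B Delta r x1 z) x2 (P12 r) /\
  is_derive (fun z => rhoE2 mu Bd B Delta r x1 z) x2 (P22 r).
Proof.
  unfold rhoE1, rhoE2, P11, P12, P22.
  split; [|split; [|split]]; auto_derive; auto; unfold Rdiv; ring.
Qed.

Lemma OmE_form r x1 x2 : Q r x1 x2 < 1 ->
  OmE1 mu Bd B Delta r x1 x2 = - Phi (Q r x1 x2) * (P11 r * rhoE1 mu Bd B Delta r x1 x2) /\
  OmE2 mu Bd B Delta r x1 x2 = - Phi (Q r x1 x2) *
    (P12 r * rhoE1 mu Bd B Delta r x1 x2 + P22 r * rhoE2 mu Bd B Delta r x1 x2).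
Proof.
  intro HQ. destruct (rhoE_partials r x1 x2) as [D11 [D21 [D12 D22]]].
  unfold OmE1, OmE2, s_std. split; apply deriv_of_is_derive.
  - replace (- Phi (Q r x1 x2) * (P11 r * rhoE1 mu Bd B Delta r x1 x2))
      with (- Phi (Q r x1 x2) * (rhoE1 mu Bd B Delta r x1 x2 * P11 r
                                 + rhoE2 mu Bd B Delta r x1 x2 * 0)) by ring.
    exact (s_pol_chain _ _ _ _ _ D11 D21 HQ).
  - replace (- Phi (Q r x1 x2) * (P12 r * rhoE1 mu Bd B Delta r x1 x2
                                  + P22 r * rhoE2 mu Bd B Delta r x1 x2))
      with (- Phi (Q r x1 x2) * (rhoE1 mu Bd B Delta r x1 x2 * P12 r
                                 + rhoE2 mu Bd B Delta r x1 x2 * P22 r)) by ring.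
    exact (s_pol_chain _ _ _ _ _ D12 D22 HQ).
Qed.

(* det H_eps = det(P)^2 det(H_e) = (P11 P22)^2 Phi(q) (Phi(q) + 2 q Phi'(q)). *)
Lemma hessian_det_form r x1 x2 : Q r x1 x2 < 1 ->
  H11 mu Bd B Delta r x1 x2 * H22 mu Bd B Delta r x1 x2
  - H12 mu Bd B Delta r x1 x2 * H21 mu Bd B Delta r x1 x2
  = (P11 r * P22 r) ^ 2 * Phi (Q r x1 x2) * (Phi (Q r x1 x2) + 2 * Q r x1 x2 * dPhi (Q r x1 x2)).
Proof.
  intro HQ. destruct (rhoE_partials r x1 x2) as [D11 [D21 [D12 D22]]].
  assert (F1 : forall y1 y2, Q r y1 y2 < 1 -> OmE1 mu Bd B Delta r y1 y2 =
     - Phi (Q r y1 y2) * (rhoE1 mu Bd B Delta r y1 y2 * P11 r + rhoE2 mu Bd B Delta r y1 y2 * 0))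
    by (intros y1 y2 H; rewrite (proj1 (OmE_form _ _ _ H)); ring).
  assert (F2 : forall y1 y2, Q r y1 y2 < 1 -> OmE2 mu Bd B Delta r y1 y2 =
     - Phi (Q r y1 y2) * (rhoE1 mu Bd B Delta r y1 y2 * P12 r + rhoE2 mu Bd B Delta r y1 y2 * P22 r))
    by (intros y1 y2 H; rewrite (proj2 (OmE_form _ _ _ H)); ring).
  unfold H11, H12, H21, H22.
  rewrite (deriv_of_is_derive _ _ _ (Phi_field_chain _ _ _ _ _ D11 D21 HQ
      (fun z => OmE1 mu Bd B Delta r z x2) _ _ (fun z => F1 z x2))),
    (deriv_of_is_derive _ _ _ (Phi_field_chain _ _ _ _ _ D12 D22 HQ
      (fun z => OmE1 mu Bd B Delta r x1 z) _ _ (fun z => F1 x1 z))),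
    (deriv_of_is_derive _ _ _ (Phi_field_chain _ _ _ _ _ D11 D21 HQ
      (fun z => OmE2 mu Bd B Delta r z x2) _ _ (fun z => F2 z x2))),
    (deriv_of_is_derive _ _ _ (Phi_field_chain _ _ _ _ _ D12 D22 HQ
      (fun z => OmE2 mu Bd B Delta r x1 z) _ _ (fun z => F2 x1 z))).
  unfold Q. ring.
Qed.

(* H_eps is nondegenerate: its determinant is (P11 P22)^2 Phi(q) / (1 - q) > 0. *)
Lemma hessian_det_pos r x1 x2 :
  0 < mu -> 0 < Bd -> 0 < Delta r -> Q r x1 x2 < 1 ->
  0 < H11 mu Bd B Delta r x1 x2 * H22 mu Bd B Delta r x1 x2
      - H12 mu Bd B Delta r x1 x2 * H21 mu Bd B Delta r x1 x2.
Proof.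
  intros Hmu HBd HD HQ.
  assert (Q0 : 0 <= Q r x1 x2) by (unfold Q; nra).
  rewrite hessian_det_form, Phi_identity by (try rewrite Rabs_pos_eq; lra).
  pose proof (Phi_pos _ (conj Q0 HQ)).
  assert (0 < / (1 - Q r x1 x2)) by (apply Rinv_0_lt_compat; lra).
  assert (0 < P11 r * P22 r).
  { unfold P11, P22. pose proof (Rinv_0_lt_compat _ (Rmult_lt_0_compat _ _ Hmu HD)).
    pose proof (Rinv_0_lt_compat _ HBd).
    apply Rmult_lt_0_compat; [apply Rmult_lt_0_compat|]; assumption. }
  apply Rmult_lt_0_compat; [apply Rmult_lt_0_compat|]; try assumption.
  apply pow_lt. assumption.
Qed.
End Change_of_basis.

Lemma norm2_lt_1 y1 y2 : norm2 y1 y2 < 1 -> y1 ^ 2 + y2 ^ 2 < 1.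
Proof.
  unfold norm2. intro H.
  destruct (Rlt_or_le (y1 ^ 2 + y2 ^ 2) 1) as [|Hge]; [assumption|].
  apply sqrt_le_1_alt in Hge. rewrite sqrt_1 in Hge. lra.
Qed.

Lemma constant_iff_deriv_zero (f : R -> R) :
  (forall r : R, ex_derive f r) -> (forall r, deriv f r = 0) <-> exists c, forall r, f r = c.
Proof.
  intro Hf. split.
  - intro H0. exists (f 0). intro r.
    assert (D : forall c, derivable_pt_lim f c 0)
      by (intro c; rewrite <- (H0 c); apply deriv_correct, Hf).
    destruct (Rle_lt_dec 0 r).
    + apply eq_of_deriv_zero; auto.
    + symmetry. apply eq_of_deriv_zero; [lra | auto].
  - intros [c Hc] r. apply deriv_eq.
    apply (derivable_pt_lim_ext (fct_cte c)); [intro z; symmetry; apply Hc|].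
    apply derivable_pt_lim_const.
Qed.

Lemma derivative_of_zero (f : R -> R) r d :
  (forall z, f z = 0) -> derivable_pt_lim f r d -> d = 0.
Proof.
  intros H0 Hd. eapply uniqueness_limite; [exact Hd|].
  apply (derivable_pt_lim_ext (fct_cte 0)); [intro z; symmetry; apply H0|].
  apply derivable_pt_lim_const.
Qed.

(* -Gam H^{-1} (a, b) vanishes iff (a, b) does, when Gam <> 0 and det H <> 0
   (the inverse of H written with the adjugate formula). *)
Lemma inverse_apply_zero Gam h11 h12 h21 h22 a b :
  Gam <> 0 -> h11 * h22 - h12 * h21 <> 0 ->
  (- Gam * (/ (h11 * h22 - h12 * h21) * (h22 * a - h12 * b)) = 0 /\
   - Gam * (/ (h11 * h22 - h12 * h21) * (- h21 * a + h11 * b)) = 0)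
  <-> a = 0 /\ b = 0.
Proof.
  intros HG Hd.
  assert (Cancel : forall X, - Gam * (/ (h11 * h22 - h12 * h21) * X) = 0 -> X = 0).
  { intros X E. apply Rmult_integral in E as [E|E]; [lra|].
    apply Rmult_integral in E as [E|E]; [|exact E].
    exfalso. exact (Rinv_neq_0_compat _ Hd E). }
  split.
  - intros [E1 E2]. apply Cancel in E1, E2.
    split; apply (Rmult_eq_reg_r (h11 * h22 - h12 * h21)); try exact Hd.
    + transitivity (h11 * (h22 * a - h12 * b) + h12 * (- h21 * a + h11 * b)); [ring|].
      rewrite E1, E2. ring.
    + transitivity (h21 * (h22 * a - h12 * b) + h22 * (- h21 * a + h11 * b)); [ring|].
      rewrite E1, E2. ring.
  - intros [-> ->]. split; ring.
Qed.

Lemma current_zero_iff (Gam : R) (h11 h12 h21 h22 O1 O2 : R -> R) :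
  Gam <> 0 -> (forall r, h11 r * h22 r - h12 r * h21 r <> 0) ->
  (forall r : R, ex_derive O1 r /\ ex_derive O2 r) ->
  (forall r,
     - Gam * (/ (h11 r * h22 r - h12 r * h21 r) * (h22 r * deriv O1 r - h12 r * deriv O2 r)) = 0 /\
     - Gam * (/ (h11 r * h22 r - h12 r * h21 r) * (- h21 r * deriv O1 r + h11 r * deriv O2 r)) = 0)
  <-> exists c1 c2, forall r, O1 r = c1 /\ O2 r = c2.
Proof.
  intros HG Hd HO.
  pose proof (constant_iff_deriv_zero O1 (fun r => proj1 (HO r))) as C1.
  pose proof (constant_iff_deriv_zero O2 (fun r => proj2 (HO r))) as C2.
  split.
  - intro J.
    assert (Z : forall r, deriv O1 r = 0 /\ deriv O2 r = 0)
      by (intro r; apply (inverse_apply_zero Gam (h11 r) (h12 r) (h21 r) (h22 r)); auto).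
    destruct (proj1 C1 (fun r => proj1 (Z r))) as [c1 H1].
    destruct (proj1 C2 (fun r => proj2 (Z r))) as [c2 H2].
    exists c1, c2. intro r. split; auto.
  - intros [c1 [c2 Hc]] r. apply inverse_apply_zero; auto. split.
    + apply C1. exists c1. intro z. apply Hc.
    + apply C2. exists c2. intro z. apply Hc.
Qed.

(* Inverting the gradient of the entropy: rho_e = - Omega_e tanh|Omega_e| / |Omega_e|,
   since |Omega_e| = Phi(p^2) p = artanh p for p = |rho_e|. *)
Lemma density_of_potentials y1 y2 : y1 ^ 2 + y2 ^ 2 < 1 ->
  let n := norm2 (Ome1 y1 y2) (Ome2 y1 y2) in
  (n = 0 -> y1 = 0 /\ y2 = 0) /\
  (n <> 0 -> y1 = - Ome1 y1 y2 * tanh n / n /\ y2 = - Ome2 y1 y2 * tanh n / n).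
Proof.
  intros Hy n. destruct (Ome_form _ _ Hy) as [E1 E2]. unfold n. rewrite E1, E2.
  set (p := sqrt (y1 ^ 2 + y2 ^ 2)).
  assert (Hp : 0 <= p < 1).
  { split; [apply sqrt_pos|]. unfold p. rewrite <- sqrt_1. apply sqrt_lt_1; nra. }
  assert (Hpq : p ^ 2 = y1 ^ 2 + y2 ^ 2) by (apply pow2_sqrt; nra).
  set (f := Phi (y1 ^ 2 + y2 ^ 2)).
  assert (Hf : 0 < f) by (apply Phi_pos; nra).
  assert (Hn : norm2 (- f * y1) (- f * y2) = f * p).
  { unfold norm2. replace ((- f * y1) ^ 2 + (- f * y2) ^ 2) with (f ^ 2 * (y1 ^ 2 + y2 ^ 2))
      by ring.
    rewrite sqrt_mult, sqrt_pow2 by nra. reflexivity. }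
  rewrite Hn. split.
  - intro E. assert (p = 0) by nra. split; nra.
  - intro E. assert (p <> 0) by (intro Z; apply E; rewrite Z; ring).
    assert (T : tanh (f * p) = p).
    { unfold f. rewrite <- Hpq, Rmult_comm, Phi_artanh by lra. apply tanh_artanh. lra. }
    rewrite T. split; field; lra.
Qed.

Lemma smooth_ex_derive f : smooth f -> forall x : R, ex_derive f x.
Proof.
  intros [D [D0 HD]] x. exists (D 1%nat x). apply is_derive_Reals. rewrite <- D0. apply HD.
Qed.

Section Along_the_state.
Variables (mu Bd : R) (B Delta : R -> R) (rho1 rho2 : R -> R -> R) (t : R).
Hypotheses (Hmu : 0 < mu) (HBd : 0 < Bd) (HDelta : forall r, 0 < Delta r).
Hypotheses (dB : forall r : R, ex_derive B r) (dDelta : forall r : R, ex_derive Delta r)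
  (drho1 : forall r : R, ex_derive (rho1 t) r) (drho2 : forall r : R, ex_derive (rho2 t) r).
Hypothesis Hinside : forall r, norm2 (re1 mu Bd B Delta rho1 rho2 t r)
                                     (re2 mu Bd B Delta rho1 rho2 t r) < 1.

Local Notation re1 := (re1 mu Bd B Delta rho1 rho2 t).
Local Notation re2 := (re2 mu Bd B Delta rho1 rho2 t).
Local Notation OE1 := (OE1 mu Bd B Delta rho1 rho2 t).
Local Notation OE2 := (OE2 mu Bd B Delta rho1 rho2 t).
Local Notation Oe1 := (Oe1 mu Bd B Delta rho1 rho2 t).
Local Notation Oe2 := (Oe2 mu Bd B Delta rho1 rho2 t).

Lemma sqnorm_lt_1 r : re1 r ^ 2 + re2 r ^ 2 < 1.
Proof. apply norm2_lt_1, Hinside. Qed.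

Lemma Oe_eq r :
  Oe1 r = - Phi (re1 r ^ 2 + re2 r ^ 2) * re1 r /\
  Oe2 r = - Phi (re1 r ^ 2 + re2 r ^ 2) * re2 r.
Proof. exact (Ome_form _ _ (sqnorm_lt_1 r)). Qed.

Lemma OE_eq r :
  OE1 r = P11 mu Bd Delta r * Oe1 r /\
  OE2 r = P12 mu Bd B Delta r * Oe1 r + P22 mu Delta r * Oe2 r.
Proof.
  destruct (OmE_form mu Bd B Delta r (rho1 t r) (rho2 t r) (sqnorm_lt_1 r)) as [E1 E2].
  destruct (Oe_eq r) as [F1 F2].
  rewrite F1, F2. unfold OE1, OE2. rewrite E1, E2.
  unfold Defs.re1, Defs.re2. split; ring.
Qed.

Lemma Oe_of_constant_OE c1 c2 :
  (forall r, OE1 r = c1 /\ OE2 r = c2) ->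
  forall r, Oe1 r = c1 * (mu * Delta r * Bd) /\ Oe2 r = mu * Delta r * (c2 - B r * c1).
Proof.
  intros Hc r. destruct (OE_eq r) as [E1 E2]. destruct (Hc r) as [C1 C2].
  pose proof (HDelta r).
  unfold P11, P12, P22 in *. rewrite C1 in E1. rewrite C2 in E2. rewrite E1, E2.
  split; field; split; lra.
Qed.

Lemma re_derivable r : ex_derive re1 r /\ ex_derive re2 r.
Proof.
  pose proof (HDelta r).
  unfold Defs.re1, Defs.re2, rhoE1, rhoE2. split; auto_derive; repeat split; auto; nra.
Qed.

Lemma OE_derivable r : ex_derive OE1 r /\ ex_derive OE2 r.
Proof.
  assert (E : forall z,
    OE1 z = P11 mu Bd Delta z * (- Phi (re1 z ^ 2 + re2 z ^ 2) * re1 z) /\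
    OE2 z = P12 mu Bd B Delta z * (- Phi (re1 z ^ 2 + re2 z ^ 2) * re1 z)
            + P22 mu Delta z * (- Phi (re1 z ^ 2 + re2 z ^ 2) * re2 z)).
  { intro z. destruct (OE_eq z) as [-> ->]. destruct (Oe_eq z) as [-> ->]. split; reflexivity. }
  assert (Hq : ex_derive (fun x => Phi x) (re1 r * (re1 r * 1) + re2 r * (re2 r * 1))).
  { eexists. apply is_derive_Phi. pose proof (sqnorm_lt_1 r).
    rewrite Rabs_pos_eq; simpl in *; nra. }
  destruct (re_derivable r). pose proof (HDelta r).
  split; [eapply ex_derive_ext; [intro z; symmetry; apply (E z)|]
         |eapply ex_derive_ext; [intro z; symmetry; apply (E z)|]];
    unfold P11, P12, P22; auto_derive; repeat split; auto; nra.
Qed.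

Lemma hdet_neq_0 r : hdet mu Bd B Delta rho1 rho2 t r <> 0.
Proof.
  apply Rgt_not_eq, hessian_det_pos; auto. apply sqnorm_lt_1.
Qed.
End Along_the_state.

Theorem mainTheorem5
  (mu Bd Gam : R) (B Delta : R -> R) (rho1 rho2 : R -> R -> R) (t : R) :
  0 < mu -> 0 < Bd -> 0 < Gam ->
  smooth B -> smooth Delta -> (forall r, 0 < Delta r) ->
  smooth (fun r => rho1 t r) -> smooth (fun r => rho2 t r) ->
  (forall r, norm2 (re1 mu Bd B Delta rho1 rho2 t r)
                   (re2 mu Bd B Delta rho1 rho2 t r) < 1) ->
  (* dynamics d_t rho_eps = - d_r j_eps, at time t *)
  (forall r, exists d1 d2,
      derivable_pt_lim (j1 mu Bd Gam B Delta rho1 rho2 t) r d1 /\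
      derivable_pt_lim (j2 mu Bd Gam B Delta rho1 rho2 t) r d2 /\
      derivable_pt_lim (fun tau => rho1 tau r) t (- d1) /\
      derivable_pt_lim (fun tau => rho2 tau r) t (- d2)) ->
  let J0 := forall r, j1 mu Bd Gam B Delta rho1 rho2 t r = 0 /\
                      j2 mu Bd Gam B Delta rho1 rho2 t r = 0 in
  let Oe1 := Oe1 mu Bd B Delta rho1 rho2 t in
  let Oe2 := Oe2 mu Bd B Delta rho1 rho2 t in
  (J0 <-> exists c1 c2, forall r,
       OE1 mu Bd B Delta rho1 rho2 t r = c1 /\
       OE2 mu Bd B Delta rho1 rho2 t r = c2) /\
  (J0 ->
     (forall r0 r,
        let Bbar := (B r - B r0) / Bd in
        let Dbar := Delta r / Delta r0 in
        Oe1 r = Oe1 r0 * Dbar /\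
        Oe2 r = (Oe2 r0 - Bbar * Oe1 r0) * Dbar) /\
     (forall r,
        let n := norm2 (Oe1 r) (Oe2 r) in
        (n = 0 -> re1 mu Bd B Delta rho1 rho2 t r = 0 /\
                  re2 mu Bd B Delta rho1 rho2 t r = 0) /\
        (n <> 0 -> re1 mu Bd B Delta rho1 rho2 t r = - Oe1 r * tanh n / n /\
                   re2 mu Bd B Delta rho1 rho2 t r = - Oe2 r * tanh n / n)) /\
     (forall r, derivable_pt_lim (fun tau => rho1 tau r) t 0 /\
                derivable_pt_lim (fun tau => rho2 tau r) t 0) /\
     ((exists c, forall r, Delta r = c) -> exists c, forall r, Oe1 r = c)).
Proof.
  intros Hmu HBd HGam sB sD HD s1 s2 Hin Hdyn. cbv zeta.
  (* H_eps is invertible and Omega_E differentiable, so j = 0 iff Omega_E is constant *)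
  assert (Hiff := current_zero_iff Gam _ _ _ _ _ _ (Rgt_not_eq _ _ HGam)
    (hdet_neq_0 mu Bd B Delta rho1 rho2 t Hmu HBd HD Hin)
    (OE_derivable mu Bd B Delta rho1 rho2 t Hmu HD (smooth_ex_derive _ sB)
       (smooth_ex_derive _ sD) (smooth_ex_derive _ s1) (smooth_ex_derive _ s2) Hin)).
  split; [exact Hiff|]. intro J.
  destruct (proj1 Hiff J) as [c1 [c2 Hc]].
  pose proof (Oe_of_constant_OE mu Bd B Delta rho1 rho2 t Hmu HBd HD Hin c1 c2 Hc) as Hprof.
  split; [|split; [|split]].
  - intros r0 r. destruct (Hprof r) as [-> ->], (Hprof r0) as [-> ->].
    pose proof (HD r0). split; field; lra.
  - intro r. exact (density_of_potentials _ _ (sqnorm_lt_1 mu Bd B Delta rho1 rho2 t Hin r)).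
  (* stationarity: d_t rho = - d_r j and j vanishes identically *)
  - intro r. destruct (Hdyn r) as [d1 [d2 [D1 [D2 [T1 T2]]]]].
    rewrite (derivative_of_zero _ _ _ (fun z => proj1 (J z)) D1), Ropp_0 in T1.
    rewrite (derivative_of_zero _ _ _ (fun z => proj2 (J z)) D2), Ropp_0 in T2.
    split; assumption.
  - intros [c Hcst]. exists (c1 * (mu * c * Bd)). intro r.
    rewrite (proj1 (Hprof r)), Hcst. reflexivity.
Qed.
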